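(* In the cost setting and for the subroutine CSE described in the context, assume the event $G$ holds and the threshold satisfies $B\ge\mu^*$. Then CSE does not return Fail, and the optimal arm $i^*$ is never eliminated.
   Context: Delay-as-payoff bandit: $K$ arms, horizon $T$, maximum delay $D\in\mathbb{N}$. Arm $i$ has an unknown distribution $\mathcal{D}_i$ on $\{0,\dots,D\}$; at step $t$ the agent picks $i_t$ based on observed feedback, $d_t\sim\mathcal{D}_{i_t}$ is drawn independently and revealed only at time $t+d_t$; the cost is $c_t=d_t/D$ (to be minimized). Let $\mu(i)=\mathbb{E}_{X\sim\mathcal{D}_i}[X/D]$, $d(i)=D\mu(i)$, $\mu^*=\min_i\mu(i)$ attained at a unique arm $i^*$. Notation at time $t$: $n_t(i)$ is the number of steps $s\le t$ with $i_s=i$; $\hat\mu_t(i)=\frac{1}{n_t(i)}\sum_{s\le t,\,i_s=i}c_s$ (empirical mean of all plays, including not-yet-observed ones); $M_t(i)=\{s\le t: i_s=i,\ s+d_s\ge t\}$, $m_t(i)=|M_t(i)|$; $\mathcal{O}_t(i)=\{s\le t: i_s=i,\ s+d_s<t\}$; $F_t(i)=\{s\le t-D: i_s=i\}$; $a\vee b=\max\{a,b\}$; $S_t$ is the active set at time $t$. CSE with inputs $T$, $K$, $D$, threshold $B$: start with $t=1$, $S=[K]$. While $t<T$: play each arm of $S$ once (round robin), observe arriving feedback, set $t\leftarrow t+|S|$; for each $i\in S$ compute $\hat\mu^-_t(i)=\frac{1}{n_t(i)}\big(\sum_{s\in M_t(i)}\frac{t-s}{D}+\sum_{s\in\mathcal{O}_t(i)}c_s\big)$,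 $L^1_t(i)=\hat\mu^-_t(i)-\sqrt{2\log T/n_t(i)}$; $\hat\mu^F_t(i)=\frac{1}{|F_t(i)|\vee1}\sum_{s\in F_t(i)}c_s$, $L^2_t(i)=\hat\mu^F_t(i)-\sqrt{2\log T/(|F_t(i)|\vee1)}$; $L^3_t(i)=\frac{|S|}{D}\big(\frac{m_t(i)}{2}-8\log T-1\big)$; $LCB_t(i)=\max\{L^1_t(i),L^2_t(i),L^3_t(i)\}$, $UCB_t(i)=\hat\mu^F_t(i)+\sqrt{2\log T/(|F_t(i)|\vee1)}$. Then remove from $S$ every arm $i$ for which some $j\in S$ has $\min\{UCB_t(j),B\}<LCB_t(i)$; if $S=\emptyset$ return (Fail, $t$). If the loop ends return (Success, $t$). Event $G$: for every $t\in[T]$ and every arm $i\in[K]$, $m_t(i)\le\frac{2d(i)}{|S_t|}+16\log T+2$ and $|\mu(i)-\hat\mu_t(i)|\le\sqrt{2\log T/n_t(i)}$. *)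

From HB Require Import structures.
From mathcomp Require Import all_boot all_order all_algebra.
From mathcomp Require Import reals exp.
Set Implicit Arguments. Unset Strict Implicit. Unset Printing Implicit Defensive.
Import Order.TTheory GRing.Theory Num.Theory.
Local Open Scope ring_scope.

(* Delay-as-payoff bandit and the subroutine CSE, on one realization.
   - Arms are ['I_K]; delays take values in {0..D} (type ['I_D.+1]).
   - [p i] is the distribution D_i of arm i (a pmf on {0..D}).
   - [dl t i] is the delay drawn at step t if arm i is pulled at step t
     (a realization of the independent draws d_t ~ D_{i_t}); the algorithm
     is deterministic given this realization.
   - Time steps are 1, 2, 3, ...  A history [h : hist] records the arm
     played at each step ([None] = no play). *)

Section CSE.
Variable R : realType.
Variables (K D T : nat) (B : R) (dl : nat -> 'I_K -> 'I_D.+1).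

Definition mu (p : 'I_K -> 'I_D.+1 -> R) (i : 'I_K) : R :=
  \sum_(x < D.+1) p i x * ((x : nat)%:R / D%:R).

Definition hist := nat -> option 'I_K.

Definition cost (s : nat) (i : 'I_K) : R := ((dl s i : nat)%:R) / D%:R.

(* the steps s in {1..t} with i_s = i; n_t(i) = size (plays h t i) *)
Definition plays (h : hist) (t : nat) (i : 'I_K) : seq nat :=
  [seq s <- iota 1 t | h s == Some i].

(* \hat mu_t(i) : empirical mean of all plays (observed or not) *)
Definition muhat (h : hist) (t : nat) (i : 'I_K) : R :=
  (\sum_(s <- plays h t i) cost s i) / (size (plays h t i))%:R.

(* M_t(i) : plays whose feedback is not yet observed (s + d_s >= t) *)
Definition Mset (h : hist) (t : nat) (i : 'I_K) : seq nat :=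
  [seq s <- plays h t i | (t <= s + dl s i)%N].

(* O_t(i) : plays whose feedback was observed (s + d_s < t) *)
Definition Oset (h : hist) (t : nat) (i : 'I_K) : seq nat :=
  [seq s <- plays h t i | (s + dl s i < t)%N].

Definition Fset (h : hist) (t : nat) (i : 'I_K) : seq nat :=
  [seq s <- plays h t i | (s + D <= t)%N].

Definition conf (n : nat) : R := Num.sqrt (2 * ln (T%:R) / n%:R).

Definition muminus (h : hist) (t : nat) (i : 'I_K) : R :=
  (\sum_(s <- Mset h t i) ((t - s)%N%:R / D%:R) + \sum_(s <- Oset h t i) cost s i)
    / (size (plays h t i))%:R.

Definition L1 (h : hist) (t : nat) (i : 'I_K) : R :=
  muminus h t i - conf (size (plays h t i)).

Definition nF (h : hist) (t : nat) (i : 'I_K) : nat := maxn (size (Fset h t i)) 1.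

Definition muF (h : hist) (t : nat) (i : 'I_K) : R :=
  (\sum_(s <- Fset h t i) cost s i) / (nF h t i)%:R.

Definition L2 (h : hist) (t : nat) (i : 'I_K) : R := muF h t i - conf (nF h t i).

Definition L3 (S : {set 'I_K}) (h : hist) (t : nat) (i : 'I_K) : R :=
  (#|S|%:R / D%:R) * ((size (Mset h t i))%:R / 2 - 8 * ln (T%:R) - 1).

Definition LCB (S : {set 'I_K}) (h : hist) (t : nat) (i : 'I_K) : R :=
  Num.max (L1 h t i) (Num.max (L2 h t i) (L3 S h t i)).

Definition UCB (h : hist) (t : nat) (i : 'I_K) : R := muF h t i + conf (nF h t i).

(* State of CSE: current time t, active set S, history, and status
   (None = running, Some true = returned Success, Some false = returned Fail). *)
Record state := St { tcur : nat; act : {set 'I_K}; hst : hist; status : option bool }.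

Definition round_hist (h : hist) (t : nat) (S : {set 'I_K}) : hist :=
  fun s => if ((t <= s) && (s < t + #|S|))%N then nth None [seq Some i | i <- enum S] (s - t)%N
           else h s.

Definition step (st : state) : state :=
  match status st with
  | Some _ => st
  | None =>
    if (tcur st < T)%N then
      let t := tcur st in
      let S := act st in
      let h' := round_hist (hst st) t S in
      let t' := t + #|S| in
      let S' := [set i in S | ~~ [exists j in S,
                    Num.min (UCB h' t' j) B < LCB S h' t' i]] in
      St t' S' h' (if S' == set0 then Some false else None)
    else St (tcur st) (act st) (hst st) (Some true)
  end.

Definition init : state := St 1 [set: 'I_K] (fun _ => None) None.

Definition run (N : nat) : state := iter N step init.

(* the complete history of the run (each iteration advances time by >= 1 while
   running, so the run has stopped after T.+1 iterations) *)
Definition final_hist : hist := hst (run T.+1).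

(* S_t : the active set from which i_t is played, i.e. the set of the
   iteration r with t_r <= t < t_{r+1} (the final set after termination) *)
Definition S_at (t : nat) : {set 'I_K} :=
  act (run (count (fun r => (tcur (run r.+1) <= t)%N) (iota 0 T.+1))).

Definition eventG (muv : 'I_K -> R) : Prop :=
  forall t : nat, (0 < t)%N -> forall i : 'I_K,
    (size (Mset final_hist t i))%:R
       <= 2 * (D%:R * muv i) / (#|S_at t|)%:R + 16 * ln (T%:R) + 2
    /\ ((0 < size (plays final_hist t i))%N ->
        `|muv i - muhat final_hist t i| <= conf (size (plays final_hist t i))).

End CSE.

From HB Require Import structures.
From mathcomp Require Import all_boot all_order all_algebra.
From mathcomp Require Import reals exp.
From mathcomp Require Import ring lra zify.
Set Implicit Arguments. Unset Strict Implicit. Unset Printing Implicit Defensive.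
Import Order.TTheory GRing.Theory Num.Theory.
Local Open Scope ring_scope.

(* On the event G every confidence bound computed by CSE is valid: for the optimal
   arm, L1, L2, L3 <= mu*, and for every active arm j, UCB j >= mu j >= mu*.  As
   B >= mu*, the elimination test min (UCB j, B) < LCB i* never fires, so i* stays
   active and the active set never becomes empty.  G speaks about the final history;
   it applies because at the end of a round, at time t, the current history agrees
   with the final one before t and is empty at t.  Hence n_t, F_t and M_t computed by
   the algorithm are those of the final history at t - 1 (resp. t - D), and the
   active set is S_(t-1).  When F_t(j) is empty, UCB j = sqrt (2 log T) >= 1 >= mu j
   because T >= 2. *)

Section Plays.
Variable K : nat.
Implicit Types (h : hist K) (i : 'I_K).

Lemma plays_succ h t i :
  plays h t.+1 i = plays h t i ++ (if h t.+1 == Some i then [:: t.+1] else [::]).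
Proof. by rewrite /plays -[X in iota _ X]addn1 iotaD filter_cat /= add1n. Qed.

Lemma plays_last_None h t i : h t = None -> plays h t i = plays h t.-1 i.
Proof. by case: t => [//|t] /= ht; rewrite plays_succ ht cats0. Qed.

Lemma eq_in_plays h1 h2 t i :
  (forall s, (0 < s <= t)%N -> h1 s = h2 s) -> plays h1 t i = plays h2 t i.
Proof. by move=> eqh; apply: eq_in_filter => s; rewrite mem_iota add1n ltnS => /eqh ->. Qed.

Lemma filter_plays_leq h t m i :
  (m <= t)%N -> [seq s <- plays h t i | (s <= m)%N] = plays h m i.
Proof.
move=> le_mt; rewrite /plays -filter_predI.
rewrite (@eq_filter _ _ (predI (fun s => h s == Some i) (fun s => s < 1 + m)%N)).
  by rewrite filter_predI filter_iota_ltn.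
by move=> s /=; rewrite andbC add1n ltnS.
Qed.

Lemma Fset_plays D h t i : Fset D h t i = plays h (t - D) i.
Proof.
rewrite /Fset -(filter_plays_leq h i (leq_subr D t)); apply: eq_in_filter => s.
by rewrite mem_filter mem_iota => /andP[_ /andP[s_gt0 _]]; lia.
Qed.

Lemma Fset_delayed_plays D h1 h2 t i : (0 < D)%N ->
  plays h1 t i = plays h2 t.-1 i -> Fset D h1 t i = plays h2 (t - D) i.
Proof.
move=> D_gt0 obs; rewrite Fset_plays -(filter_plays_leq h1 i (leq_subr D t)) obs.
by rewrite filter_plays_leq //; lia.
Qed.

Lemma size_Mset_delayed D (dl : nat -> 'I_K -> 'I_D.+1) h1 h2 t i :
  plays h1 t i = plays h2 t.-1 i ->
  (size (Mset dl h1 t i) <= size (Mset dl h2 t.-1 i))%N.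
Proof.
move=> obs; rewrite /Mset obs !size_filter; apply: sub_count => s /=.
exact/leq_trans/leq_pred.
Qed.

Lemma muminus_le_muhat (R : realType) D (dl : nat -> 'I_K -> 'I_D.+1) h t i :
  muminus R dl h t i <= muhat R dl h t i.
Proof.
rewrite /muminus /muhat ler_wpM2r ?invr_ge0 ?ler0n // /Mset /Oset.
move: (plays h t i) => P; rewrite !big_filter [leRHS](bigID (fun s => t <= s + dl s i)%N).
apply: lerD; last by under [leRHS]eq_bigl do rewrite -ltnNge.
apply: ler_sum => s pending; rewrite /cost ler_wpM2r ?invr_ge0 ?ler0n //.
by rewrite ler_nat leq_subLR.
Qed.

End Plays.

Section Run.
Variables (R : realType) (K D T : nat) (B : R) (dl : nat -> 'I_K -> 'I_D.+1).
Local Notation run := (run T B dl).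
Local Notation step := (step T B dl).

Lemma run_succ n : run n.+1 = step (run n).
Proof. exact: iterS. Qed.

Lemma tcur_run_nondecr : {homo (fun n => tcur (run n)) : m n / (m <= n)%N}.
Proof.
apply: homo_leq => [//||n]; first exact: leq_trans.
by rewrite run_succ /step; case: (status _) => //; case: ifP => //= _; apply: leq_addr.
Qed.

Lemma hst_run_stable m k s : (m <= k)%N -> (s < tcur (run m))%N ->
  hst (run k) s = hst (run m) s.
Proof.
move=> le_mk lt_s; elim: k le_mk => [|k IHk]; first by rewrite leqn0 => /eqP ->.
rewrite leq_eqVlt => /orP[/eqP -> //|lt_mk].
have lt_sk := leq_trans lt_s (@tcur_run_nondecr m k lt_mk).
rewrite run_succ /step -IHk //; case: (status _) => //; case: ifP => //= _.
by rewrite /round_hist leqNgt lt_sk.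
Qed.

Lemma hst_run_future n s : (tcur (run n) <= s)%N -> hst (run n) s = None.
Proof.
elim: n => [//|n IHn]; rewrite run_succ /step.
case: (status _) => [_ /IHn //|]; case: ifP => //= _ le_s.
by rewrite /round_hist ltnNge le_s andbF IHn //; apply: leq_trans (leq_addr _ _) le_s.
Qed.

Lemma plays_run_final m i : (m <= T.+1)%N ->
  plays (hst (run m)) (tcur (run m)) i = plays (final_hist T B dl) (tcur (run m)).-1 i.
Proof.
move=> le_mT; rewrite plays_last_None ?hst_run_future //.
apply: eq_in_plays => s /andP[s_gt0 le_s].
by rewrite /final_hist (@hst_run_stable m T.+1 s) //; lia.
Qed.

Lemma S_at_run n t : (n <= T.+1)%N -> (tcur (run n) <= t < tcur (run n.+1))%N ->
  S_at T B dl t = act (run n).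
Proof.
move=> le_nT /andP[ge_t lt_t]; rewrite /S_at -size_filter.
rewrite (@eq_in_filter _ _ (fun r => r < 0 + n)%N) ?filter_iota_ltn ?size_iota //.
move=> r _; rewrite add0n.
case: ltnP => [lt_rn | le_nr]; first exact: leq_trans (tcur_run_nondecr lt_rn) ge_t.
by apply/negbTE; rewrite -ltnNge (leq_trans lt_t) ?tcur_run_nondecr.
Qed.

Lemma step_running n : status (run n) = None -> (tcur (run n) < T)%N ->
  let t := tcur (run n.+1) in let h := hst (run n.+1) in let S := act (run n) in
  [/\ t = (tcur (run n) + #|S|)%N,
      act (run n.+1) =
        [set i in S | ~~ [exists j in S, Num.min (UCB R T dl h t j) B < LCB R T dl S h t i]]
    & status (run n.+1) = if act (run n.+1) == set0 then Some false else None].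
Proof. by move=> running lt_T; rewrite run_succ /step running lt_T. Qed.

Lemma running_tcur_gt : (0 < K)%N ->
  forall n, status (run n) = None -> act (run n) != set0 /\ (n < tcur (run n))%N.
Proof.
move=> K_gt0; elim=> [_|n IHn]; first by split=> //; apply/set0Pn; exists (Ordinal K_gt0).
rewrite run_succ /step; case st_n: (status (run n)) => [b|] /=; first by rewrite st_n.
have [S_ne lt_n] := IHn st_n; rewrite -card_gt0 in S_ne.
case: ifP => //= _; case: ifP => // /negbT S'_ne _; split=> //.
by have := leq_add lt_n S_ne; rewrite addn1.
Qed.

Lemma round_observed n : (0 < K)%N -> status (run n) = None -> (tcur (run n) < T)%N ->
  let t := tcur (run n.+1) in
  [/\ (2 <= T)%N, (0 < t.-1)%N, S_at T B dl t.-1 = act (run n)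
    & forall i, plays (hst (run n.+1)) t i = plays (final_hist T B dl) t.-1 i].
Proof.
move=> K_gt0 running lt_T t; have [tcur_succ _ _] := step_running running lt_T.
have [S_ne lt_n] := running_tcur_gt K_gt0 running; rewrite -card_gt0 in S_ne.
split=> [|||i]; rewrite /t ?tcur_succ; first by lia.
- by lia.
- by apply: S_at_run; rewrite ?tcur_succ; lia.
- by rewrite -tcur_succ plays_run_final //; lia.
Qed.

End Run.

Lemma half_le_ln2 (R : realType) : 1 / 2 <= ln (2 : R).
Proof.
have := @le_ln1Dx R (- (1 / 2)); rewrite [1 + _](_ : _ = 2^-1); last by field.
by rewrite lnV ?posrE //; lra.
Qed.

Lemma one_le_conf1 (R : realType) T : (2 <= T)%N -> 1 <= conf R T 1.
Proof.
move=> T_ge2; rewrite /conf divr1 -[leLHS]sqrtr1 ler_sqrt; last first.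
  by apply: mulr_ge0 => //; apply: ln_ge0; rewrite ler1n; lia.
have : ln (2 : R) <= ln T%:R by rewrite ler_ln ?posrE ?ltr0n ?ler_nat //; lia.
by have := half_le_ln2 R; lra.
Qed.

Lemma L3_le_of_pending_bound (R : realFieldType) (s d m mu l : R) : 0 < s -> 0 < d ->
  m <= 2 * (d * mu) / s + 16 * l + 2 -> s / d * (m / 2 - 8 * l - 1) <= mu.
Proof.
move=> s_gt0 d_gt0 m_le; rewrite mulrC -ler_pdivlMr ?divr_gt0 // invf_div.
by rewrite -!mulrA in m_le; lra.
Qed.

Section ConfidenceBounds.
Variables (R : realType) (K D T : nat) (B : R) (dl : nat -> 'I_K -> 'I_D.+1).
Variable muv : 'I_K -> R.
Hypotheses (D_gt0 : (0 < D)%N) (T_ge2 : (2 <= T)%N).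
Hypotheses (muv_ge0 : forall i, 0 <= muv i) (muv_le1 : forall i, muv i <= 1).
Hypothesis G : eventG T B dl muv.
Local Notation F := (final_hist T B dl).

Lemma muhat_sub_conf_le_mu t i : muhat R dl F t i - conf R T (size (plays F t i)) <= muv i.
Proof.
case: (posnP (size (plays F t i))) => [n0 | n_gt0].
  (* with no play, muhat = conf = 0 since x / 0 = 0 *)
  by rewrite /muhat /conf n0 !invr0 !mulr0 sqrtr0 subr0.
have t_gt0 : (0 < t)%N by move: n_gt0; case: t.
by move: (proj2 (G t_gt0 i) n_gt0) => /ler_distlCBl.
Qed.

Lemma dist_mu_muF_le_conf h t i : plays h t i = plays F t.-1 i ->
  `|muv i - muF R dl h t i| <= conf R T (nF D h t i).
Proof.
move=> obs; rewrite /muF /nF (Fset_delayed_plays D_gt0 obs).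
case: (posnP (size (plays F (t - D) i))) => [/size0nil -> | n_gt0].
  by rewrite big_nil mul0r subr0 ger0_norm // (le_trans (muv_le1 i)) ?one_le_conf1.
have tD_gt0 : (0 < t - D)%N by move: n_gt0; case: (t - D)%N.
by rewrite (maxn_idPl n_gt0); exact: (proj2 (G tD_gt0 i) n_gt0).
Qed.

Lemma L1_le_mu h t i : plays h t i = plays F t.-1 i -> L1 R T dl h t i <= muv i.
Proof.
move=> obs; apply: le_trans (muhat_sub_conf_le_mu t.-1 i).
by rewrite /L1 obs lerD2r (le_trans (muminus_le_muhat R dl h t i)) // /muhat obs.
Qed.

Lemma L3_le_mu S h t i : plays h t i = plays F t.-1 i -> (0 < t.-1)%N ->
  S_at T B dl t.-1 = S -> S != set0 -> L3 R T dl S h t i <= muv i.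
Proof.
move=> obs t_gt0 S_t S_ne; have [pending_le _] := G t_gt0 i; rewrite S_t in pending_le.
apply: L3_le_of_pending_bound; rewrite ?ltr0n ?card_gt0 //.
by apply: le_trans pending_le; rewrite ler_nat size_Mset_delayed.
Qed.

Lemma LCB_le_mu S h t i : plays h t i = plays F t.-1 i -> (0 < t.-1)%N ->
  S_at T B dl t.-1 = S -> S != set0 -> LCB R T dl S h t i <= muv i.
Proof.
move=> obs t_gt0 S_t S_ne; rewrite /LCB !ge_max L1_le_mu ?L3_le_mu // andbT.
by move: (dist_mu_muF_le_conf obs) => /ler_distlCBl.
Qed.

Lemma optimal_arm_not_eliminated S h t istar j :
  (forall i, plays h t i = plays F t.-1 i) -> (0 < t.-1)%N -> S_at T B dl t.-1 = S ->
  istar \in S -> muv istar <= muv j -> muv istar <= B ->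
  ~~ (Num.min (UCB R T dl h t j) B < LCB R T dl S h t istar).
Proof.
move=> obs t_gt0 S_t istar_in le_j le_B.
have S_ne : S != set0 by apply/set0Pn; exists istar.
have LCB_le_opt := LCB_le_mu (obs istar) t_gt0 S_t S_ne.
rewrite -leNgt le_min (le_trans LCB_le_opt le_B) andbT.
apply: le_trans LCB_le_opt (le_trans le_j _).
by move: (dist_mu_muF_le_conf (obs j)) => /ler_distlDr.
Qed.

End ConfidenceBounds.

Section Pmf.
Variables (R : realType) (K D : nat) (p : 'I_K -> 'I_D.+1 -> R).
Hypotheses (p_ge0 : forall i x, 0 <= p i x) (p_sum1 : forall i, \sum_(x < D.+1) p i x = 1).

Lemma mu_ge0 i : 0 <= mu p i.
Proof. by apply: sumr_ge0 => x _; rewrite mulr_ge0 ?divr_ge0 ?ler0n. Qed.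

Lemma mu_le1 : (0 < D)%N -> forall i, mu p i <= 1.
Proof.
move=> D_gt0 i; rewrite /mu -[leRHS](p_sum1 i) ler_sum // => x _.
apply: ler_piMr => //; rewrite ler_pdivrMr ?ltr0n // mul1r ler_nat -ltnS.
exact: ltn_ord.
Qed.

End Pmf.

Theorem lemma3 (R : realType) (K D T : nat) (p : 'I_K -> 'I_D.+1 -> R)
  (dl : nat -> 'I_K -> 'I_D.+1) (B : R) (istar : 'I_K) :
  (0 < D)%N ->
  (forall i x, 0 <= p i x) ->
  (forall i, \sum_(x < D.+1) p i x = 1) ->
  (forall j, j != istar -> mu p istar < mu p j) ->
  eventG T B dl (mu p) ->
  mu p istar <= B ->
  forall N : nat,
    status (run T B dl N) != Some false /\ istar \in act (run T B dl N).
Proof.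
move=> D_gt0 p_ge0 p_sum1 istar_opt G B_ge.
have K_gt0 : (0 < K)%N := leq_ltn_trans (leq0n istar) (ltn_ord istar).
elim=> [|n [not_fail istar_in]]; first by rewrite inE.
case st_n: (status (run T B dl n)) => [b|].
  by have -> : run T B dl n.+1 = run T B dl n by rewrite run_succ /step st_n.
case: (ltnP (tcur (run T B dl n)) T) => [lt_T|ge_T]; last first.
  by rewrite run_succ /step st_n ltnNge ge_T.
have [_ act_succ status_succ] := step_running st_n lt_T.
have [T_ge2 t_gt0 S_now obs] := round_observed K_gt0 st_n lt_T.
have istar_in' : istar \in act (run T B dl n.+1).
  rewrite act_succ inE istar_in /=; apply/existsPn => j.
  case: (boolP (j \in _)) => //= j_in.
  apply: (optimal_arm_not_eliminated D_gt0 T_ge2 (mu_ge0 p_ge0) (mu_le1 p_ge0 p_sum1 D_gt0)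
            G obs t_gt0 S_now istar_in _ B_ge).
  by case: (eqVneq j istar) => [-> // | /istar_opt/ltW].
split=> //; rewrite status_succ; case: ifP => // /eqP act0.
by rewrite act0 inE in istar_in'.
Qed.
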